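(* For every positive integer $n$, the set $[n]=\{1,\dots,n\}$ admits exactly one $2$-good partition.
   Context: For integers $n>0$ and $m>1$, a partition of $[n]=\{1,\dots,n\}$ into nonempty parts is called $m$-good if every part has at most $m$ elements and the sum of the elements of every part is a power of $m$, i.e. equals $m^s$ for some integer $s\ge 0$. Thus a $2$-good partition is a partition of $[n]$ into parts of size $1$ or $2$, each with sum a power of $2$. *)

From mathcomp Require Import all_boot.
Set Implicit Arguments. Unset Strict Implicit. Unset Printing Implicit Defensive.

(* The ground set [n] = {1,...,n}, realised inside the finite type 'I_n.+1
   (whose elements are 0..n) as the elements with positive value. *)
Definition ground (n : nat) : {set 'I_n.+1} := [set i : 'I_n.+1 | 0 < val i].

(* P is an m-good partition of [n]: P is a partition of [n] into nonempty
   parts (finset's [partition], which excludes the empty block), each part has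
   at most m elements, and the sum of the elements of each part is m^s. *)
Definition good_partition (m n : nat) (P : {set {set 'I_n.+1}}) : Prop :=
  partition P (ground n) /\
  forall B, B \in P -> #|B| <= m /\ exists s : nat, \sum_(i in B) val i = m ^ s.
Arguments good_partition m n P : clear implicits.

From mathcomp Require Import all_boot zify.
Set Implicit Arguments. Unset Strict Implicit.

(* Parts of a 2-good partition have at most two elements, so such a partition
   is the orbit partition of an involution g of {1, ..., n} with x + g x a power
   of 2 for every x (a fixed point x is then itself a power of 2, since 2x is).
   Such an involution is unique: if 2^k <= n < 2^(k+1), every x >= 2^k must
   satisfy x + g x = 2^(k+1), the only power of 2 in (2^k, 2^(k+2)); this
   forces g x = 2^(k+1) - x on the whole interval [2^(k+1) - n, n], so g
   restricts to an involution of the shorter segment {1, ..., 2^(k+1) - n - 1}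
   and induction applies. The same recursion constructs the involution. *)

Definition pow2 m := exists s, m = 2 ^ s.

Lemma pow2_double m : pow2 (m + m) <-> pow2 m.
Proof.
split=> [[[|s] e] | [s ->]]; last by exists s.+1; rewrite expnS; lia.
  by rewrite expn0 in e; lia.
by exists s; rewrite expnS in e; lia.
Qed.

Lemma pow2_between k m : pow2 m -> 2 ^ k < m < 2 ^ k.+2 -> m = 2 ^ k.+1.
Proof. by case=> s -> /andP[]; rewrite !ltn_exp2l // => ks sk; congr (2 ^ _); lia. Qed.

Lemma trunc_log2_bounds t : 0 < t -> 2 ^ trunc_log 2 t <= t < 2 ^ (trunc_log 2 t).+1.
Proof. by move=> t0; rewrite trunc_logP ?trunc_log_ltn. Qed.

Definition pow2_involution t (g : nat -> nat) :=
  forall x, 0 < x <= t -> [/\ 0 < g x <= t, g (g x) = x & pow2 (x + g x)].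

Section Pow2InvolutionSplit.
Variables (t : nat) (g : nat -> nat).
Local Notation k := (trunc_log 2 t).

Lemma pow2_involution_top x : 0 < t -> pow2_involution t g ->
  2 ^ k.+1 - t <= x <= t -> g x = 2 ^ k.+1 - x.
Proof.
move=> t_gt0 gP.
have /andP[tk kt] := trunc_log2_bounds t_gt0; rewrite expnS in kt *.
have upper y : 2 ^ k <= y <= t -> g y = 2 * 2 ^ k - y.
  move=> yt; have [gy _ sum_y] := gP y ltac:(lia).
  have := pow2_between (k := k) sum_y; rewrite !expnS; lia.
move=> xt; case: (leqP (2 ^ k) x) => xk; first by apply: upper; lia.
have [_ ggx _] := gP (2 * 2 ^ k - x) ltac:(lia).
have := upper (2 * 2 ^ k - x) ltac:(lia).
rewrite (_ : 2 * 2 ^ k - (2 * 2 ^ k - x) = x); last lia.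
by move=> e; rewrite e in ggx.
Qed.

Lemma pow2_involution_bottom : 0 < t -> pow2_involution t g ->
  pow2_involution (2 ^ k.+1 - t).-1 g.
Proof.
move=> t_gt0 gP x xt.
have := trunc_log2_bounds t_gt0; rewrite expnS in xt * => /andP[tk kt].
have [gx ggx sum_x] := gP x ltac:(lia).
split=> //; apply/andP; split; first lia.
case: (leqP (2 * 2 ^ k - t) (g x)) => gxt; last lia.
have := pow2_involution_top t_gt0 gP (x := g x); rewrite expnS ggx => gxE.
have := gxE ltac:(lia); lia.
Qed.

End Pow2InvolutionSplit.

Lemma pow2_involution_unique t g1 g2 :
  pow2_involution t g1 -> pow2_involution t g2 -> forall x, 0 < x <= t -> g1 x = g2 x.
Proof.
elim: t {-2}t (leqnn t) g1 g2 => [|u IH] t tu g1 g2 g1P g2P x xt; first lia.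
have t0 : 0 < t by lia.
case: (leqP (2 ^ (trunc_log 2 t).+1 - t) x) => xk.
  by rewrite (pow2_involution_top t0 g1P) ?(pow2_involution_top t0 g2P) //; lia.
have := trunc_log2_bounds t0; rewrite expnS in xk * => /andP[tk kt].
by apply: (IH _ _ _ _ (pow2_involution_bottom t0 g1P) (pow2_involution_bottom t0 g2P));
  rewrite expnS; lia.
Qed.

(* The segment length [t] decreases at each call, so [fuel = t] suffices. *)
Fixpoint pow2_partner fuel t x :=
  if fuel is f.+1 then
    let p := 2 ^ (trunc_log 2 t).+1 in
    if p - t <= x then p - x else pow2_partner f (p - t).-1 x
  else x.

Lemma pow2_partnerP fuel t : t <= fuel -> pow2_involution t (pow2_partner fuel t).
Proof.
elim: fuel t => [|f IH] t tf x xt /=; first lia.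
have t0 : 0 < t by lia.
have := trunc_log2_bounds t0; rewrite expnS => /andP[tk kt].
case: ifP => xk.
  rewrite ifT; last lia.
  by split; [lia | lia | exists (trunc_log 2 t).+1; rewrite expnS; lia].
have [gx ggx sum_x] := IH (2 * 2 ^ trunc_log 2 t - t).-1 ltac:(lia) x ltac:(lia).
by rewrite ifF ?ggx; [split=> //; lia | lia].
Qed.

Section PairPartition.
Variables (T : finType) (D : {set T}).

Definition pair_partition (f : T -> T) : {set {set T}} := [set [set x; f x] | x in D].

Lemma eq_pair_partition f g : {in D, f =1 g} -> pair_partition f = pair_partition g.
Proof. by move=> fg; apply: eq_in_imset => x Dx; rewrite fg. Qed.

Lemma pair_partitionP f :
  {in D, forall x, f x \in D} -> {in D, involutive f} -> partition (pair_partition f) D.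
Proof.
move=> fD fK; pose R := [rel x y | (y == x) || (y == f x)].
have R_equiv : {in D & &, equivalence_rel R}.
  move=> x y z Dx Dy Dz; rewrite /= eqxx; split=> // /orP[]/eqP-> //.
  by rewrite fK // orbC.
suff -> : pair_partition f = equivalence_partition R D by apply: equivalence_partitionP.
apply: eq_in_imset => x Dx; apply/setP => y; rewrite !inE /=.
by case: eqP => [-> | _]; case: eqP => [-> | _]; rewrite ?andbF ?fD ?Dx.
Qed.

Variable P : {set {set T}}.
Hypotheses (partP : partition P D) (P_le2 : forall B, B \in P -> #|B| <= 2).

Definition pblock_partner x := odflt x [pick y in pblock P x | y != x].

Let tiP : trivIset P. Proof. by case/and3P: partP. Qed.
Let covP : cover P = D. Proof. by case/and3P: partP => /eqP. Qed.

Let pblock_sub x y : x \in D -> y \in pblock P x -> y \in D.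
Proof.
by move=> Dx Py; rewrite -covP; apply/bigcupP; exists (pblock P x); rewrite ?pblock_mem ?covP.
Qed.

Lemma pblock_partnerE x : x \in D -> pblock P x = [set x; pblock_partner x].
Proof.
move=> Dx; have Px : x \in pblock P x by rewrite mem_pblock covP.
rewrite /pblock_partner; case: pickP => [y /andP[Py yx] | no_y] /=.
  apply/esym/eqP; rewrite eqEcard cards2 eq_sym yx P_le2 ?pblock_mem ?covP // andbT.
  by apply/subsetP => z /set2P[]->.
apply/setP => z; rewrite !inE orbb; apply/idP/eqP => [Pz | -> //].
by move: (no_y z); rewrite /= Pz => /negbFE/eqP.
Qed.

Lemma mem_pblock_partner x : x \in D -> pblock_partner x \in pblock P x.
Proof. by move=> Dx; rewrite pblock_partnerE // !inE eqxx orbT. Qed.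

Lemma pblock_partner_in x : x \in D -> pblock_partner x \in D.
Proof. by move=> Dx; apply: pblock_sub Dx (mem_pblock_partner Dx). Qed.

Lemma pblock_partnerK : {in D, involutive pblock_partner}.
Proof.
move=> x Dx; set y := pblock_partner x.
have same_xy : pblock P y = pblock P x := same_pblock tiP (mem_pblock_partner Dx).
have : x \in pblock P y by rewrite same_xy mem_pblock covP.
rewrite pblock_partnerE ?pblock_partner_in // !inE => /orP[/eqP xy | /eqP //].
by rewrite -xy -/y xy.
Qed.

Lemma pair_partition_pblock_partner : pair_partition pblock_partner = P.
Proof.
rewrite -{1}(equivalence_partition_pblock partP); apply: eq_in_imset => x Dx.
by apply/setP => y; rewrite inE -pblock_partnerE // andb_idl // => /(pblock_sub Dx).
Qed.

End PairPartition.

Section Ground.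
Variable n : nat.
Local Notation D := (ground n).

Definition nat_lift (f : nat -> nat) (x : 'I_n.+1) : 'I_n.+1 := inord (f (val x)).

Definition nat_restrict (h : 'I_n.+1 -> 'I_n.+1) (v : nat) : nat := val (h (inord v)).

Lemma in_ground (x : 'I_n.+1) : (x \in D) = (0 < val x).
Proof. by rewrite inE. Qed.

Lemma ground_ltn (x : 'I_n.+1) : x \in D -> 0 < val x <= n.
Proof. by rewrite in_ground => ->; rewrite -ltnS ltn_ord. Qed.

Lemma val_nat_lift f (x : 'I_n.+1) :
  pow2_involution n f -> x \in D -> val (nat_lift f x) = f (val x).
Proof. by move=> fP /ground_ltn/fP[/andP[_ fx] _ _]; rewrite /= inordK. Qed.

Lemma pow2_sum_set2 (x y : 'I_n.+1) :
  pow2 (\sum_(i in [set x; y]) val i) <-> pow2 (val x + val y).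
Proof.
have [<- | xy] := eqVneq x y; first by rewrite setUid big_set1 pow2_double.
by rewrite big_setU1 ?inE //= big_set1.
Qed.

Lemma good_pair_partition f :
  pow2_involution n f -> good_partition 2 n (pair_partition D (nat_lift f)).
Proof.
move=> fP; have fxE := val_nat_lift fP.
split.
  apply: pair_partitionP => x Dx; have [/andP[fx0 _] ffx _] := fP _ (ground_ltn Dx).
    by rewrite in_ground fxE.
  by apply: val_inj; rewrite fxE ?in_ground fxE ?ffx.
move=> _ /imsetP[x Dx ->]; rewrite cards2 ltnS leq_b1; split=> //.
by apply/pow2_sum_set2; rewrite fxE //; have [] := fP _ (ground_ltn Dx).
Qed.

Section GoodPartition.
Variable P : {set {set 'I_n.+1}}.
Hypothesis goodP : good_partition 2 n P.

Let P_le2 B : B \in P -> #|B| <= 2. Proof. by case/goodP.2. Qed.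

Lemma good_partition_pow2_involution :
  pow2_involution n (nat_restrict (pblock_partner P)).
Proof.
move=> v /andP[v0 vn]; rewrite /nat_restrict.
have vE : val (inord v : 'I_n.+1) = v by rewrite /= inordK.
have Dv : inord v \in D by rewrite in_ground vE.
split; first exact/ground_ltn/(pblock_partner_in goodP.1 P_le2).
  by rewrite inord_val (pblock_partnerK goodP.1 P_le2).
have PB : pblock P (inord v) \in P.
  by apply: pblock_mem; case/and3P: goodP.1 => /eqP->.
have [_ sum_pow2] := goodP.2 _ PB.
suff : pow2 (val (inord v : 'I_n.+1) + val (pblock_partner P (inord v))) by rewrite vE.
by apply/pow2_sum_set2; rewrite -(pblock_partnerE goodP.1 P_le2 Dv).
Qed.

Lemma good_partition_eq f : pow2_involution n f -> P = pair_partition D (nat_lift f).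
Proof.
move=> fP; rewrite -(pair_partition_pblock_partner goodP.1 P_le2).
apply: eq_pair_partition => x Dx; apply: val_inj; rewrite val_nat_lift //.
rewrite -(pow2_involution_unique good_partition_pow2_involution fP (ground_ltn Dx)).
by rewrite /nat_restrict inord_val.
Qed.

End GoodPartition.
End Ground.

Theorem mainTheorem3 (n : nat) (hn : 0 < n) :
  exists! P : {set {set 'I_n.+1}}, good_partition 2 n P.
Proof.
have partnerP := pow2_partnerP (leqnn n).
exists (pair_partition (ground n) (nat_lift (pow2_partner n n))).
split=> [|P goodP]; first exact: good_pair_partition.
by rewrite (good_partition_eq goodP partnerP).
Qed.
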